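(* Let $Q$ be a finite quiver with $kQ$ of finite GK-dimension. For any graded right $kQ$-module $M$, $\pi^*M=0$ if and only if $\mathrm{Hom}_{\mathrm{QGr}\,kQ}(\pi^*\mathcal O_v,\pi^*M)=0$ for every cyclic vertex $v$.
   Context: $kQ$ is the path algebra of a finite quiver over a field $k$, graded by path length. $\mathrm{QGr}\,kQ$ is the quotient of graded right modules by torsion modules (modules each of whose elements is annihilated by $(kQ)_{\ge n}$ for some $n$), with quotient functor $\pi^*$. With finite GK-dimension each cyclic vertex $v$ lies on a unique simple cycle $p=(v=v_0,a_1,\dots,a_n,v_n=v)$, and $\mathcal O_v=e_vkQ/\bigoplus p^m a_1\cdots a_i b\,kQ$ (sum over $m\ge0$, $0\le i<n$, arrows $b\neq a_{i+1}$ with source $v_i$). *)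

From HB Require Import structures.
From mathcomp Require Import all_boot all_order all_algebra.
Set Implicit Arguments. Unset Strict Implicit. Unset Printing Implicit Defensive.
Import Order.TTheory GRing.Theory Num.Theory.
Local Open Scope ring_scope.

(* A finite quiver. Paths are written left to right: the path a_1 ... a_n
   satisfies tgt a_i = src a_(i+1). *)
Record quiver := Quiver {
  qV : finType; qA : finType; src : qA -> qV; tgt : qA -> qV }.

Fixpoint ispath {Q : quiver} (v w : qV Q) (s : seq (qA Q)) : bool :=
  match s with
  | [::] => v == w
  | a :: s' => (src a == v) && ispath (tgt a) w s'
  end.

(* number of paths of length m (= dim of (kQ)_m) *)
Definition npaths (Q : quiver) (m : nat) : nat :=
  (\sum_(v : qV Q) \sum_(w : qV Q) #|[set t : m.-tuple (qA Q) | ispath v w t]|)%N.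

(* kQ has finite GK-dimension: with the generating subspace V = kQ_0 + kQ_1,
   dim V^n = dim kQ_{<= n} grows at most polynomially in n. *)
Definition finite_GKdim (Q : quiver) : Prop :=
  exists c C : nat, forall n : nat,
    (\sum_(m < n.+1) npaths Q m <= C * n.+1 ^ c)%N.

Definition simple_cycle (Q : quiver) (v : qV Q) (c : seq (qA Q)) : bool :=
  [&& (0 < size c)%N, ispath v v c & uniq (map (@src Q) c)].

(* A Z-graded right kQ-module, given by its homogeneous pieces
   M_(d,w) = (M e_w)_d and the right action of arrows. *)
Record grmod (k : fieldType) (Q : quiver) := GrMod {
  gsp : int -> qV Q -> lmodType k;
  gact : forall (d : int) (w : qV Q) (a : qA Q), gsp d w -> gsp (d + 1) (tgt a) }.
Arguments gsp {k Q} g d w : rename.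
Arguments gact {k Q} g d w a x : rename.
Arguments GrMod {k Q} gsp gact.

(* module axioms: arrow actions are k-linear, and x e_w a = 0 unless w = src a *)
Definition is_grmod k Q (M : grmod k Q) : Prop :=
  (forall d w a (c : k) (x y : gsp M d w),
      gact M d w a (c *: x + y) = c *: gact M d w a x + gact M d w a y) /\
  (forall d w a (x : gsp M d w), w != src a -> gact M d w a x = 0).

Definition grsub k Q (M : grmod k Q) := forall d w, gsp M d w -> Prop.

Definition zero_sub k Q (M : grmod k Q) : grsub M := fun d w x => x = 0.
Arguments zero_sub {k Q} M d w x.

Definition incl k Q (M : grmod k Q) (S T : grsub M) : Prop :=
  forall d w x, S d w x -> T d w x.
Arguments incl {k Q M} S T.

Definition is_subgr k Q (M : grmod k Q) (S : grsub M) : Prop :=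
  (forall d w, S d w 0) /\
  (forall d w (c : k) x y, S d w x -> S d w y -> S d w (c *: x + y)) /\
  (forall d w a x, S d w x -> S (d + 1) (tgt a) (gact M d w a x)).
Arguments is_subgr {k Q M} S.

Fixpoint killmod k Q (M : grmod k Q) (S : grsub M) (n : nat) :
    forall d w, gsp M d w -> Prop :=
  match n with
  | 0%N => fun d w x => S d w x
  | n'.+1 => fun d w x => forall a, @killmod k Q M S n' (d + 1) (tgt a) (gact M d w a x)
  end.
Arguments killmod {k Q M} S n d w x.

(* M/S is torsion: every element is annihilated (mod S) by (kQ)_{>= n}, some n *)
Definition torsion_quot k Q (M : grmod k Q) (S : grsub M) : Prop :=
  forall d w x, exists n, killmod S n d w x.
Arguments torsion_quot {k Q M} S.

Definition torsion_sub k Q (M : grmod k Q) (T : grsub M) : Prop :=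
  forall d w x, T d w x -> exists n, killmod (zero_sub M) n d w x.
Arguments torsion_sub {k Q M} T.

(* g (a set map, lifting to M) induces a graded kQ-hom  N' -> M/M' *)
Definition qhom k Q (N M : grmod k Q) (N' : grsub N) (M' : grsub M)
    (g : forall d w, gsp N d w -> gsp M d w) : Prop :=
  (forall d w (c : k) x y, N' d w x -> N' d w y ->
      M' d w (g d w (c *: x + y) - (c *: g d w x + g d w y))) /\
  (forall d w a x, N' d w x ->
      M' (d + 1) (tgt a) (g (d + 1) (tgt a) (gact N d w a x) - gact M d w a (g d w x))).
Arguments qhom {k Q N M} N' M' g.

(* Hom_{QGr kQ}(pi^*(N/I), pi^*M) = 0, where
   Hom_QGr(pi N0, pi M) = colim Hom_Gr(N', M/M') over graded submodules
   N' <= N0 with N0/N' torsion and torsion graded submodules M' <= M.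
   Submodules N' of N0 = N/I are encoded as submodules of N containing I,
   and homs into M/M' by set-theoretic lifts g. The colimit is zero iff every
   element becomes zero at some larger index (N'' <= N', M'' >= M'). *)
Definition HomQGr_zero k Q (N : grmod k Q) (I : grsub N) (M : grmod k Q) : Prop :=
  forall (N' : grsub N) (M' : grsub M) (g : forall d w, gsp N d w -> gsp M d w),
    is_subgr N' -> incl I N' -> torsion_quot N' ->
    is_subgr M' -> torsion_sub M' ->
    qhom N' M' g -> (forall d w x, I d w x -> M' d w (g d w x)) ->
    exists (N'' : grsub N) (M'' : grsub M),
      is_subgr N'' /\ incl I N'' /\ incl N'' N' /\ torsion_quot N'' /\
      is_subgr M'' /\ torsion_sub M'' /\ incl M' M'' /\
      (forall d w x, N'' d w x -> M'' d w (g d w x)).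
Arguments HomQGr_zero {k Q N} I M.

(* pi^* M = 0  (pi^*M is a zero object iff End_QGr(pi^*M) = 0) *)
Definition pi_zero k Q (M : grmod k Q) : Prop := HomQGr_zero (zero_sub M) M.
Arguments pi_zero {k Q} M.

(* The graded right module e_v kQ: (e_v kQ e_w)_d has basis the paths of
   length d from v to w (none if d < 0). *)
Definition pbasis (Q : quiver) (v : qV Q) (d : int) (w : qV Q) : finType :=
  {t : (absz d).-tuple (qA Q) | (0 <= d) && ispath v w t}.

Definition evkQ_sp (k : fieldType) (Q : quiver) (v : qV Q) (d : int) (w : qV Q)
  : lmodType k := {ffun pbasis v d w -> k^o}.

Definition evkQ_act (k : fieldType) (Q : quiver) (v : qV Q) (d : int) (w : qV Q)
    (a : qA Q) (f : evkQ_sp k v d w) : evkQ_sp k v (d + 1) (tgt a) :=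
  [ffun y : pbasis v (d + 1) (tgt a) =>
     \sum_(x : pbasis v d w)
        (if (val x : seq _) ++ [:: a] == (val y : seq _) then f x else 0)].

Definition evkQ (k : fieldType) (Q : quiver) (v : qV Q) : grmod k Q :=
  @GrMod k Q (evkQ_sp k v) (@evkQ_act k Q v).
Arguments evkQ k {Q} v.

(* the right submodule  (+)_{m, i, b} p^m a_1 ... a_i b kQ  of e_v kQ,
   where c = [a_1; ...; a_n] is the simple cycle p at v, 0 <= i < n,
   and b <> a_(i+1) is an arrow with source v_i = src a_(i+1).
   It is spanned by the basis paths of the form p^m a_1..a_i b q. *)
Definition Ov_rel (k : fieldType) (Q : quiver) (v : qV Q) (c : seq (qA Q))
  : grsub (evkQ k v) :=
  fun d w f => forall x : pbasis v d w, f x != 0 ->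
    exists (m i : nat) (b : qA Q) (q : seq (qA Q)),
      [/\ (i < size c)%N, b != nth b c i, src b = src (nth b c i) &
          (val x : seq _) = flatten (nseq m c) ++ take i c ++ b :: q].
Arguments Ov_rel k {Q} v c d w f.

(* If pi^*M = 0, every element of M is torsion, and then every morphism into
   pi^*M vanishes. Conversely, let x in M be non-torsion. Choose a vertex w0
   carrying a non-torsion y0 with as few vertices as possible reachable from
   w0: then every non-torsion element reachable from w0 can come back, so y0
   can be pushed by arrows, staying non-torsion, around a simple cycle p at w0.
   Finite GK-dimension forbids two loops at one vertex with different first
   arrows (they would give 2^N paths of length N L), so at each step the next
   arrow of p is the only one keeping the element non-torsion. Sending the
   path of length d along p to the element reached after d - D steps then
   defines a nonzero morphism pi^*O_v -> pi^*M. *)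

From HB Require Import structures.
From mathcomp Require Import all_boot all_order all_algebra.
From mathcomp Require Import zify.
From Stdlib Require Import Classical.
Set Implicit Arguments. Unset Strict Implicit. Unset Printing Implicit Defensive.
Import Order.TTheory GRing.Theory Num.Theory.

(** * Paths and loops *)

Lemma size_flatten_nseq (T : Type) m (s : seq T) :
  size (flatten (nseq m s)) = (m * size s)%N.
Proof. by elim: m => //= m IH; rewrite size_cat IH mulSn. Qed.

Section QuiverPaths.
Variable Q : quiver.
Implicit Types (u v w : qV Q) (a b : qA Q) (s t : seq (qA Q)).

Definition path_tgt v s := foldl (fun _ a => tgt a) v s.

Lemma ispath_tgt v w s : ispath v w s -> w = path_tgt v s.
Proof. by elim: s v => [|a s IH] v /=; [move/eqP | case/andP=> _ /IH]. Qed.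

Lemma ispath_cat v w s t :
  ispath v w (s ++ t) = ispath v (path_tgt v s) s && ispath (path_tgt v s) w t.
Proof. by elim: s v => [|a s IH] v /=; rewrite ?eqxx // IH andbA. Qed.

Lemma cat_ispath u v w s t : ispath u v s -> ispath v w t -> ispath u w (s ++ t).
Proof. by move=> us vt; rewrite ispath_cat -(ispath_tgt us) us. Qed.

Lemma ispath_flatten_nseq u m s : ispath u u s -> ispath u u (flatten (nseq m s)).
Proof.
by move=> us; elim: m => [|m IH] /=; [rewrite eqxx | apply: cat_ispath us IH].
Qed.

Lemma src_nth v w s a i : ispath v w s -> (i < size s)%N ->
  src (nth a s i) = path_tgt v (take i s).
Proof.
elim: s v i => [|b s IH] v [|i] //= /andP[/eqP sb bs] lt //.
exact: IH bs lt.
Qed.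

Lemma tgt_nth v w s a i : ispath v w s -> (i < size s)%N ->
  tgt (nth a s i) = path_tgt v (take i.+1 s).
Proof.
elim: s v i => [|b s IH] v [|i] //= /andP[_ bs]; last exact: IH.
by case: s {IH bs}.
Qed.

Lemma ispath_mkseq (f : nat -> qA Q) : (forall i, tgt (f i) = src (f i.+1)) ->
  forall m, ispath (src (f 0)) (src (f m)) (mkseq f m).
Proof.
move=> ff; elim=> [|m IH]; first by rewrite /= eqxx.
by rewrite mkseqS -cats1; apply: cat_ispath IH _; rewrite /= ff !eqxx.
Qed.

End QuiverPaths.

Lemma exp2_gt_poly (C c L : nat) : (0 < L)%N ->
  exists N, (C * (N * L).+1 ^ c < 2 ^ N)%N.
Proof.
(* With K > C (2 (c + 1) L)^c and N = K (c + 1):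
   C (N L + 1)^c <= C (2 (c + 1) L)^c K^c < K^(c + 1) < 2^N. *)
move=> L_gt0; set K := (C * (2 * c.+1 * L) ^ c).+1; exists (K * c.+1)%N.
have NL_le : ((K * c.+1 * L).+1 <= 2 * c.+1 * L * K)%N.
  have : (0 < K * c.+1 * L)%N by rewrite !muln_gt0 L_gt0.
  lia.
apply: (@leq_ltn_trans (C * (2 * c.+1 * L) ^ c * K ^ c)).
  rewrite -[X in (_ <= X)%N]mulnA -expnMn leq_mul2l.
  by case: (posnP c) => [->|c_gt0]; rewrite ?expn0 ?leq_exp2r ?NL_le ?orbT.
apply: (@ltn_trans (K ^ c.+1)); first by rewrite expnS ltn_mul2r expn_gt0 ltnSn.
by rewrite expnM ltn_exp2r // ltn_expl.
Qed.

Section LoopGrowth.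
Variable Q : quiver.
Implicit Types (u : qV Q) (a : qA Q) (s : seq (qA Q)).

Lemma card_loops_le_npaths u m :
  (#|[set t : m.-tuple (qA Q) | ispath u u t]| <= npaths Q m)%N.
Proof. by rewrite /npaths (bigD1 u) //= (bigD1 u) //= -addnA leq_addr. Qed.

(* Concatenating N blocks chosen from two distinct loops of length L gives 2^N
   distinct loops of length N * L. *)
Lemma two_loops_exp_growth u B1 B2 L N :
  ispath u u B1 -> ispath u u B2 -> size B1 = L -> size B2 = L -> B1 != B2 ->
  (2 ^ N <= npaths Q (N * L))%N.
Proof.
move=> uB1 uB2 sB1 sB2 B12.
pose blk (b : bool) := if b then B1 else B2.
have size_blk b : size (blk b) = L by case: b.
have shape_blk (t : N.-tuple bool) : shape (map blk t) = nseq N L.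
  by case: t => /= bs /eqP <-; elim: bs => //= b bs ->; rewrite size_blk.
have size_enc (t : N.-tuple bool) : size (flatten (map blk t)) == (N * L)%N.
  by rewrite size_flatten shape_blk sumn_nseq mulnC.
pose enc t := Tuple (size_enc t).
have enc_inj : injective enc.
  move=> t1 t2 /(congr1 val) /= /(congr1 (reshape (nseq N L))) E.
  have blk_inj : injective blk by move=> [] [] //= B; rewrite B eqxx in B12.
  apply/val_inj/(inj_map blk_inj).
  by move: E; rewrite -{1}(shape_blk t1) -(shape_blk t2) !flattenK.
have loop_enc (bs : seq bool) : ispath u u (flatten (map blk bs)).
  by elim: bs => [|b bs IH] /=; [rewrite eqxx | case: b; apply: cat_ispath IH].
have <- : #|enc @: [set: N.-tuple bool]| = (2 ^ N)%N.
  by rewrite card_imset // cardsT card_tuple card_bool.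
apply: leq_trans (card_loops_le_npaths u _); apply/subset_leq_card/subsetP.
by move=> _ /imsetP[t _ ->]; rewrite inE loop_enc.
Qed.

Lemma npaths_poly_bound : finite_GKdim Q ->
  exists c C, forall m, (npaths Q m <= C * m.+1 ^ c)%N.
Proof.
case=> c [C bound]; exists c, C => m; apply: leq_trans (bound m).
by rewrite big_ord_recr leq_addl.
Qed.

Lemma loops_same_head u a1 a2 s1 s2 : finite_GKdim Q ->
  ispath u u (a1 :: s1) -> ispath u u (a2 :: s2) -> a1 = a2.
Proof.
move=> /npaths_poly_bound[c [C bound]] loop1 loop2; apply/eqP/negPn/negP => a12.
set L1 := size (a1 :: s1); set L2 := size (a2 :: s2).
have L_gt0 : (0 < L1 * L2)%N by rewrite muln_gt0.
have [N lt_exp] := exp2_gt_poly C c L_gt0.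
have := two_loops_exp_growth N (ispath_flatten_nseq L2 loop1)
  (ispath_flatten_nseq L1 loop2) (etrans (size_flatten_nseq _ _) (mulnC _ _))
  (size_flatten_nseq _ _).
have -> : flatten (nseq L2 (a1 :: s1)) != flatten (nseq L1 (a2 :: s2)).
  by apply: contra a12 => /eqP[->].
by move=> /(_ isT) /leq_trans /(_ (bound _)); rewrite leqNgt lt_exp.
Qed.

End LoopGrowth.

Local Open Scope ring_scope.

(** * Torsion elements *)

Section HomogeneousPoints.
Variables (k : fieldType) (Q : quiver) (G : grmod k Q).

(* A homogeneous element together with its degree and vertex, so that
   walking along arrows stays inside one type. *)
Definition hpt := {dw : int * qV Q & gsp G dw.1 dw.2}.

Definition hpt_of d w (x : gsp G d w) : hpt :=
  existT (fun dw => gsp G dw.1 dw.2) (d, w) x.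

Definition hpt_act (a : qA Q) (p : hpt) : hpt :=
  let: existT dw x := p in hpt_of (gact G dw.1 dw.2 a x).

Definition hpt_acts (p : hpt) (s : seq (qA Q)) := foldl (fun q a => hpt_act a q) p s.

Definition hpt_in (S : grsub G) (p : hpt) : Prop :=
  S (projT1 p).1 (projT1 p).2 (projT2 p).

Lemma hpt_act_idx (p : hpt) a : projT1 (hpt_act a p) = ((projT1 p).1 + 1, tgt a).
Proof. by case: p. Qed.

Lemma killmodP (S : grsub G) n d w x :
  killmod S n d w x <-> forall s, size s = n -> hpt_in S (hpt_acts (hpt_of x) s).
Proof.
elim: n d w x => [|n IH] d w x /=.
  by split=> [Sx [|//] _ | /(_ [::])]; last exact.
split=> [kill [|a s] //= [/(IH _ _ _).1] | kill a]; first exact.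
by apply/IH => s sz; apply: (kill (a :: s)); rewrite /= sz.
Qed.

Lemma killmod_high (S : grsub G) (D : int) : (forall d w x, D <= d -> S d w x) ->
  forall m d w x, D <= d + m%:Z -> killmod S m d w x.
Proof.
move=> S_high; elim=> [|m IH] d w x /=; first by rewrite addr0; exact: S_high.
by move=> le_D a; apply: IH; rewrite -addrA -(PoszD 1 m) add1n.
Qed.

Definition hcast dw dw' (e : dw = dw') (x : gsp G dw.1 dw.2) : gsp G dw'.1 dw'.2 :=
  eq_rect dw (fun p => gsp G p.1 p.2) x dw' e.

Lemma hcast_act (p : hpt) d w a (e1 : projT1 p = (d, w))
    (e2 : projT1 (hpt_act a p) = (d + 1, tgt a)) :
  hcast e2 (projT2 (hpt_act a p)) = gact G d w a (hcast e1 (projT2 p)).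
Proof.
case: p e1 e2 => [[d' w'] x] e1 e2.
have [dd ww] : d' = d /\ w' = w by case: e1.
subst d' w'.
by rewrite (eq_irrelevance e1 erefl) (eq_irrelevance e2 erefl).
Qed.

Section Killmod.
Variable S : grsub G.
Hypothesis S_subgr : is_subgr S.

Lemma killmodS n d w x : killmod S n d w x -> killmod S n.+1 d w x.
Proof.
elim: n d w x => [|n IH] d w x /=; first by move=> Sx a; exact: S_subgr.2.2.
by move=> kill a; apply: IH.
Qed.

Lemma killmod_le n m d w x : (n <= m)%N -> killmod S n d w x -> killmod S m d w x.
Proof.
by move/subnK <-; elim: (m - n)%N => // j IH /IH; rewrite addSn; apply: killmodS.
Qed.

Lemma killmod_lin : is_grmod G -> forall n d w (c : k) x y,
  killmod S n d w x -> killmod S n d w y -> killmod S n d w (c *: x + y).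
Proof.
move=> G_mod; elim=> [|n IH] d w c x y /=; first exact: S_subgr.2.1.
by move=> kx ky a; rewrite G_mod.1; apply: IH.
Qed.

End Killmod.
End HomogeneousPoints.

Section Torsion.
Variables (k : fieldType) (Q : quiver) (M : grmod k Q).
Hypothesis M_mod : is_grmod M.

Lemma gact0 d w a : gact M d w a 0 = 0.
Proof.
have := M_mod.1 d w a 1 0 0; rewrite !scale1r addr0 => E.
by apply: (addrI (gact M d w a 0)); rewrite addr0 -E.
Qed.

Lemma gactZ d w a (r : k) x : gact M d w a (r *: x) = r *: gact M d w a x.
Proof. by have := M_mod.1 d w a r x 0; rewrite !addr0 gact0 addr0. Qed.

Lemma zero_subgr : is_subgr (zero_sub M).
Proof.
split=> //; split=> [d w c x y -> ->|d w a x ->]; first by rewrite scaler0 addr0.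
exact: gact0.
Qed.

Definition torsion_elt d w (x : gsp M d w) := exists n, killmod (zero_sub M) n d w x.

Lemma torsion_elt0 d w : torsion_elt (0 : gsp M d w).
Proof. by exists 0%N. Qed.

Lemma torsion_elt_lin d w (c : k) x y :
  torsion_elt x -> torsion_elt y -> @torsion_elt d w (c *: x + y).
Proof.
move=> [n1 kx] [n2 ky]; exists (maxn n1 n2).
apply: (killmod_lin zero_subgr M_mod).
  exact: (killmod_le zero_subgr (leq_maxl _ _) kx).
exact: (killmod_le zero_subgr (leq_maxr _ _) ky).
Qed.

Lemma torsion_eltZ d w (c : k) (x : gsp M d w) : torsion_elt x -> torsion_elt (c *: x).
Proof.
by move=> tx; rewrite -(addr0 (c *: x)); apply: torsion_elt_lin (torsion_elt0 _ _).
Qed.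

Lemma torsion_elt_act d w a x : @torsion_elt d w x -> torsion_elt (gact M d w a x).
Proof. by case=> n kill; exists n; apply: (killmodS zero_subgr kill). Qed.

Lemma torsion_elt_arrows d w x : (forall a, torsion_elt (gact M d w a x)) ->
  @torsion_elt d w x.
Proof.
move=> /fin_all_exists[n kill]; exists (\max_a n a).+1 => a.
exact: (killmod_le zero_subgr (leq_bigmax a) (kill a)).
Qed.

Lemma torsion_elt_off d w a x : w != src a -> torsion_elt (gact M d w a x).
Proof. by move=> off; rewrite M_mod.2 //; exact: torsion_elt0. Qed.

Lemma torsion_elt_hcast dw dw' (e : dw = dw') x :
  torsion_elt (hcast e x) <-> torsion_elt x.
Proof. by case: dw' / e. Qed.

Lemma torsion_elt_subgr : is_subgr (fun d w (x : gsp M d w) => torsion_elt x).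
Proof.
split; first exact: torsion_elt0.
by split=> *; [apply: torsion_elt_lin | apply: torsion_elt_act].
Qed.

Lemma torsion_elt_acts n d w x :
  (forall s, size s = n -> torsion_elt (projT2 (hpt_acts (hpt_of x) s))) ->
  @torsion_elt d w x.
Proof.
elim: n d w x => [|n IH] d w x tors; first exact: (tors [::]).
apply: torsion_elt_arrows => a; apply: IH => s sz.
by apply: (tors (a :: s)); rewrite /= sz.
Qed.

Lemma HomQGr_zero_of_torsion (N : grmod k Q) (I : grsub N) :
  (forall d w (x : gsp M d w), torsion_elt x) -> HomQGr_zero I M.
Proof.
move=> tors N' M' g N'_subgr IN' N'_tq *.
exists N', (fun _ _ _ => True); do !split => //.
by move=> d w x _; exact: tors.
Qed.

Lemma torsion_of_pi_zero : pi_zero M -> forall d w (x : gsp M d w), torsion_elt x.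
Proof.
have all_subgr : is_subgr (fun d w (x : gsp M d w) => True) by [].
have all_tq : torsion_quot (fun d w (x : gsp M d w) => True) by exists 0%N.
have zero_ts : torsion_sub (zero_sub M) by move=> d w x ->; exists 0%N.
have id_qhom : qhom (fun d w (x : gsp M d w) => True) (zero_sub M) (fun d w x => x).
  by split=> *; rewrite /zero_sub subrr.
move=> /(_ _ _ _ all_subgr (fun _ _ _ _ => I) all_tq zero_subgr zero_ts id_qhom).
case=> [|N'' [M''] [_ [_ [_ [N''_tq [_ [M''_ts [_ N''M'']]]]]]] d w x] //.
have [n /killmodP kill] := N''_tq d w x.
apply: (@torsion_elt_acts n) => s /kill /N''M''; exact: M''_ts.
Qed.

End Torsion.

(** * A nonzero morphism out of O_v *)

Lemma abszD1 (d : int) : 0 <= d -> absz (d + 1) = (absz d).+1.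
Proof. by case: d => // m _; rewrite -PoszD addn1. Qed.

Section WalkCoefficient.
Variables (k : fieldType) (Q : quiver) (v : qV Q) (cyc : nat -> qA Q).
Hypothesis cyc_walk : forall i, tgt (cyc i) = src (cyc i.+1).
Hypothesis cyc_src : src (cyc 0) = v.

Definition walk L := mkseq cyc L.

Lemma walkS L : walk L.+1 = rcons (walk L) (cyc L).
Proof. exact: mkseqS. Qed.

Lemma walk_ispath L : ispath v (src (cyc L)) (walk L).
Proof. by rewrite -cyc_src; apply: ispath_mkseq. Qed.

Definition walk_coef d w (f : evkQ_sp k v d w) : k :=
  \sum_(t : pbasis v d w | tval (sval t) == walk (absz d)) f t.

Definition walk_basis d w (d_ge0 : 0 <= d) (vw : ispath v w (walk (absz d)))
  : pbasis v d w :=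
  exist _ (@Tuple (absz d) _ (walk (absz d)) (introT eqP (size_mkseq _ _)))
    (introT andP (conj d_ge0 vw)).

Lemma walk_coefE d w (f : evkQ_sp k v d w) (t0 : pbasis v d w) :
  tval (sval t0) == walk (absz d) -> walk_coef f = f t0.
Proof.
move=> /eqP t0E; rewrite /walk_coef (bigD1 t0) ?t0E //= big1 ?addr0 //.
move=> t /andP[/eqP tE].
by rewrite -t0E in tE; rewrite (val_inj (val_inj tE)) eqxx.
Qed.

Lemma walk_coef_lin d w (c : k) (x y : evkQ_sp k v d w) :
  walk_coef (c *: x + y) = c * walk_coef x + walk_coef y.
Proof.
by rewrite /walk_coef big_distrr -big_split; apply: eq_bigr => t _; rewrite !ffunE.
Qed.

Lemma walk_coef_off d w (f : evkQ_sp k v d w) :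
  w != src (cyc (absz d)) -> walk_coef f = 0.
Proof.
move=> off; rewrite /walk_coef big1 // => t /eqP tE; case/negP: off.
have /andP[_] := svalP t; rewrite tE => /ispath_tgt->.
by rewrite -(ispath_tgt (walk_ispath _)).
Qed.

Lemma walk_coef_act d w a (f : evkQ_sp k v d w) :
  walk_coef (gact (evkQ k v) d w a f) =
  if (0 <= d) && (a == cyc (absz d)) then walk_coef f else 0.
Proof.
case: (lerP 0 d) => [d_ge0|d_lt0] /=; last first.
  rewrite /walk_coef big1 // => y _; rewrite ffunE big1 // => x _.
  have /andP[d_ge0 _] := svalP x.
  by have := lt_le_trans d_lt0 d_ge0; rewrite ltxx.
have act_walkE (s : seq (qA Q)) :
    (s ++ [:: a] == walk (absz (d + 1))) = (s == walk (absz d)) && (a == cyc (absz d)).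
  by rewrite abszD1 // walkS cats1 eqseq_rcons.
case: eqP => [a_cyc|a_ncyc].
  have y_walk : ispath v (tgt a) (walk (absz (d + 1))).
    by rewrite a_cyc abszD1 // cyc_walk; exact: walk_ispath.
  have d1_ge0 : 0 <= d + 1 by rewrite (le_trans d_ge0) ?lerDl.
  rewrite (@walk_coefE _ _ _ (walk_basis d1_ge0 y_walk)) //= ffunE.
  rewrite /walk_coef [RHS]big_mkcond /=.
  by apply: eq_bigr => x _; rewrite act_walkE a_cyc eqxx andbT.
rewrite /walk_coef big1 // => y /eqP y_walk; rewrite ffunE big1 // => x _.
by rewrite y_walk act_walkE // (introF eqP a_ncyc) andbF.
Qed.

Lemma walk_coef_hpt_act (p : hpt (evkQ k v)) a :
  walk_coef (projT2 (hpt_act a p)) =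
  if (0 <= (projT1 p).1) && (a == cyc (absz (projT1 p).1)) then walk_coef (projT2 p)
  else 0.
Proof. by case: p => [[d w] x]; exact: walk_coef_act. Qed.

Definition unit_ev : evkQ_sp k v 0 v := [ffun => 1].

Definition ev_walk L : hpt (evkQ k v) :=
  hpt_acts (hpt_of (unit_ev : gsp (evkQ k v) 0 v)) (walk L).

Lemma ev_walk_idx L : projT1 (ev_walk L) = (L%:Z, src (cyc L)).
Proof.
elim: L => [|L IH]; first by rewrite /= cyc_src.
rewrite /ev_walk walkS /hpt_acts foldl_rcons -/(hpt_acts _ _) hpt_act_idx.
by rewrite IH /= cyc_walk -PoszD addn1.
Qed.

Lemma walk_coef_ev_walk L : walk_coef (projT2 (ev_walk L)) = 1.
Proof.
elim: L => [|L IH].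
  have v_walk0 : ispath v v (walk (absz 0)) by rewrite /= eqxx.
  by rewrite /= (@walk_coefE _ _ _ (walk_basis (lexx 0) v_walk0)) // ffunE.
rewrite /ev_walk walkS /hpt_acts foldl_rcons -/(hpt_acts _ _) walk_coef_hpt_act.
by rewrite -/(ev_walk L) IH ev_walk_idx /= eqxx.
Qed.

Variable n : nat.
Hypothesis cyc_periodic : forall i, cyc (i + n) = cyc i.

Lemma cyc_mulnD m i : cyc (m * n + i) = cyc i.
Proof. by elim: m => // m IH; rewrite mulSn -addnA addnC cyc_periodic. Qed.

(* A walk along the cycle never leaves it, so it is not one of the paths
   p^m a_1 ... a_i b q spanning the relations of O_v. *)
Lemma walk_notin_Ov L m i b q : (i < n)%N -> b != nth b (mkseq cyc n) i ->
  walk L != flatten (nseq m (mkseq cyc n)) ++ take i (mkseq cyc n) ++ b :: q.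
Proof.
move=> lt_in; rewrite nth_mkseq //; apply: contra => /eqP walkE.
have size_pm : size (flatten (nseq m (mkseq cyc n))) = (m * n)%N.
  by rewrite size_flatten_nseq size_mkseq.
have size_take : size (take i (mkseq cyc n)) = i.
  by rewrite size_takel // size_mkseq ltnW.
have lt_L : (m * n + i < L)%N.
  by have := congr1 size walkE; rewrite size_mkseq !size_cat size_pm size_take /= => ->;
     rewrite ltn_add2l addnS ltnS leq_addr.
have := congr1 (fun s => nth b s (m * n + i)) walkE.
rewrite /= nth_mkseq // cyc_mulnD nth_cat size_pm ltnNge leq_addr /= addKn.
by rewrite nth_cat size_take ltnn subnn /= => ->.
Qed.

Lemma walk_coef_Ov d w (f : evkQ_sp k v d w) :
  Ov_rel k v (mkseq cyc n) d w f -> walk_coef f = 0.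
Proof.
move=> Ov_f; rewrite /walk_coef big1 // => t /eqP tE; apply/eqP/negPn/negP.
case/Ov_f=> m [i [b [q [+ b_ne _ E]]]]; rewrite size_mkseq => lt_in.
by have := walk_notin_Ov (absz d) m q lt_in b_ne; rewrite -tE E eqxx.
Qed.

End WalkCoefficient.

Lemma absz_subD (D : nat) (d : int) : D%:Z <= d -> absz d = (D + absz (d - D%:Z))%N.
Proof.
move=> le_Dd; apply/eqP; rewrite -eqz_nat PoszD !gez0_abs ?subr_ge0 //.
  by rewrite addrCA subrr addr0.
exact: le_trans le_Dd.
Qed.

Section CycleHom.
Variables (k : fieldType) (Q : quiver) (M : grmod k Q).
Hypothesis M_mod : is_grmod M.
Variables (v : qV Q) (n D : nat) (cyc : nat -> qA Q) (Z : nat -> hpt M).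
Hypothesis cyc_periodic : forall i, cyc (i + n) = cyc i.
Hypothesis cyc_walk : forall i, tgt (cyc i) = src (cyc i.+1).
Hypothesis cyc_src : src (cyc 0) = v.
Hypothesis n_dvd_D : (n %| D)%N.
Hypothesis Z_idx : forall t, projT1 (Z t) = ((D + t)%N%:Z, src (cyc t)).
Hypothesis Z_nontorsion : forall t, ~ torsion_elt (projT2 (Z t)).
Hypothesis Z_next : forall t, Z t.+1 = hpt_act (cyc t) (Z t).
Hypothesis Z_exit : forall t b, b != cyc t -> torsion_elt (projT2 (hpt_act b (Z t))).

Lemma cyc_addD t : cyc (D + t) = cyc t.
Proof. by case/dvdnP: n_dvd_D => m ->; rewrite cyc_mulnD. Qed.

Lemma cyc_subD d : D%:Z <= d -> cyc (absz (d - D%:Z)) = cyc (absz d).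
Proof. by move=> /absz_subD->; rewrite cyc_addD. Qed.

Lemma Z_idx_deg d w : D%:Z <= d -> w = src (cyc (absz d)) ->
  projT1 (Z (absz (d - D%:Z))) = (d, w).
Proof.
move=> le_Dd ->; rewrite Z_idx cyc_subD //; congr (_, _).
by rewrite PoszD gez0_abs ?subr_ge0 // addrCA subrr addr0.
Qed.

Definition Zlift d w (r : k) : gsp M d w :=
  match projT1 (Z (absz (d - D%:Z))) =P (d, w) with
  | ReflectT e => r *: hcast e (projT2 (Z (absz (d - D%:Z))))
  | ReflectF _ => 0
  end.

Lemma ZliftE d w r (e : projT1 (Z (absz (d - D%:Z))) = (d, w)) :
  Zlift d w r = r *: hcast e (projT2 (Z (absz (d - D%:Z)))).
Proof. by rewrite /Zlift; case: eqP => [e'|//]; rewrite (eq_irrelevance e' e). Qed.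

Lemma Zlift_lin d w (c r1 r2 : k) :
  Zlift d w (c * r1 + r2) = c *: Zlift d w r1 + Zlift d w r2.
Proof.
by rewrite /Zlift; case: eqP => [e|_]; rewrite ?scalerDl ?scalerA // scaler0 addr0.
Qed.

Lemma Zlift0 d w : Zlift d w 0 = 0.
Proof. by rewrite /Zlift; case: eqP => // e; rewrite scale0r. Qed.

Lemma Zlift_act_cycle d w r : D%:Z <= d -> w = src (cyc (absz d)) ->
  gact M d w (cyc (absz d)) (Zlift d w r) = Zlift (d + 1) (tgt (cyc (absz d))) r.
Proof.
move=> le_Dd wE; have d_ge0 : 0 <= d by apply: le_trans le_Dd.
have le_Dd1 : D%:Z <= d + 1 by rewrite (le_trans le_Dd) ?lerDl.
have e1 := Z_idx_deg le_Dd wE.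
have tgtE : tgt (cyc (absz d)) = src (cyc (absz (d + 1))) by rewrite abszD1 // cyc_walk.
have e2 := Z_idx_deg le_Dd1 tgtE.
rewrite (ZliftE _ e1) (ZliftE _ e2) (gactZ M_mod); congr (_ *: _).
move: e2; rewrite addrAC abszD1 ?subr_ge0 // Z_next cyc_subD // => e2.
by rewrite (hcast_act e1 e2).
Qed.

Lemma Zlift_act_exit d w a r : D%:Z <= d -> w = src (cyc (absz d)) ->
  a != cyc (absz d) -> torsion_elt (gact M d w a (Zlift d w r)).
Proof.
move=> le_Dd wE a_exit; have e1 := Z_idx_deg le_Dd wE.
have e2 : projT1 (hpt_act a (Z (absz (d - D%:Z)))) = (d + 1, tgt a).
  by rewrite hpt_act_idx e1.
rewrite (ZliftE _ e1) (gactZ M_mod); apply: (torsion_eltZ M_mod).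
rewrite -(hcast_act e1 e2); apply/(torsion_elt_hcast e2 _).2/Z_exit.
by rewrite cyc_subD.
Qed.

Definition walk_hom d w (f : evkQ_sp k v d w) : gsp M d w :=
  if D%:Z <= d then Zlift d w (walk_coef cyc f) else 0.

(* walk_hom vanishes below degree D, so there it is compatible with the action
   only on elements whose walk coefficient already vanishes. *)
Definition walk_dom : grsub (evkQ k v) :=
  fun d w (f : evkQ_sp k v d w) => D%:Z <= d \/ walk_coef cyc f = 0.

Lemma walk_dom_subgr : is_subgr walk_dom.
Proof.
split; first by right; rewrite /walk_coef big1 // => t _; rewrite ffunE.
split=> [d w c x y [le_Dd|x0]|d w a x [le_Dd|x0]]; first by left.
- by case=> [|y0]; [left | right; rewrite walk_coef_lin x0 y0 mulr0 addr0].
- by left; rewrite (le_trans le_Dd) ?lerDl.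
- by right; rewrite (walk_coef_act cyc_walk cyc_src) x0 if_same.
Qed.

Lemma walk_dom_tq : torsion_quot walk_dom.
Proof.
move=> d w x; exists (absz (D%:Z - d)); apply: (killmod_high (D := D%:Z)) => [*|]; first by left.
by rewrite abszE -lerBlDl ler_norm.
Qed.

Lemma walk_hom_act d w a x : walk_dom x ->
  torsion_elt (walk_hom (gact (evkQ k v) d w a x) - gact M d w a (walk_hom x)).
Proof.
have tors0 d' w' : torsion_elt (0 : gsp M d' w') by exact: torsion_elt0.
rewrite /walk_hom; case: (boolP (D%:Z <= d + 1)) => [le_Dd1|lt_d1D] dom_x; last first.
  have lt_dD : ~~ (D%:Z <= d) by apply: contra lt_d1D => /le_trans->; rewrite ?lerDl.
  by rewrite (negbTE lt_dD) gact0 // subrr.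
case: (boolP (D%:Z <= d)) => [le_Dd|lt_dD]; last first.
  case: dom_x => [le_Dd|x0]; first by rewrite le_Dd in lt_dD.
  by rewrite gact0 // subr0 (walk_coef_act cyc_walk cyc_src) x0 if_same Zlift0.
rewrite (walk_coef_act cyc_walk cyc_src) (le_trans _ le_Dd) //=.
case: (eqVneq w (src (cyc (absz d)))) => [wE|w_off]; last first.
  by rewrite (walk_coef_off cyc_walk cyc_src) // if_same !Zlift0 gact0 // subrr.
case: eqP => [->|/eqP a_exit]; first by rewrite Zlift_act_cycle // subrr.
by rewrite Zlift0 sub0r -scaleN1r; apply/(torsion_eltZ M_mod)/Zlift_act_exit.
Qed.

Lemma walk_hom_qhom : qhom walk_dom (fun d w (x : gsp M d w) => torsion_elt x) walk_hom.
Proof.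
split=> [d w c x y _ _|d w a x]; last exact: walk_hom_act.
rewrite /walk_hom; case: ifP => _.
  by rewrite walk_coef_lin Zlift_lin subrr; exact: torsion_elt0.
by rewrite scaler0 addr0 subrr; exact: torsion_elt0.
Qed.

Lemma walk_hom_Ov d w f : Ov_rel k v (mkseq cyc n) d w f -> torsion_elt (walk_hom f).
Proof.
move=> /(walk_coef_Ov cyc_periodic) f0.
by rewrite /walk_hom f0 Zlift0 if_same; exact: torsion_elt0.
Qed.

(* e_v times the walk of length m + D lies in any submodule of torsion
   cokernel for m large, and walk_hom sends it to the non-torsion Z m. *)
Lemma not_HomQGr_zero_cycle : ~ HomQGr_zero (Ov_rel k v (mkseq cyc n)) M.
Proof.
have Ov_dom : incl (Ov_rel k v (mkseq cyc n)) walk_dom.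
  by move=> d w f /(walk_coef_Ov cyc_periodic); right.
move=> /(_ walk_dom _ walk_hom walk_dom_subgr Ov_dom walk_dom_tq
  (torsion_elt_subgr M_mod) (fun _ _ _ => id) walk_hom_qhom walk_hom_Ov).
case=> N'' [M''] [N''_subgr [_ [_ [N''_tq [_ [M''_ts [_ N''M'']]]]]]].
have [m kill] := N''_tq 0 v (unit_ev k v).
have /killmodP := killmod_le N''_subgr (leq_addr D m) kill.
move=> /(_ (walk cyc (m + D)) (size_mkseq _ _)); rewrite -/(ev_walk k v cyc (m + D)).
have := walk_coef_ev_walk k cyc_walk cyc_src (m + D).
have := ev_walk_idx k cyc_walk cyc_src (m + D).
case: (ev_walk _ _) => [[d w] f] /= [dE wE] coef1 /N''M'' /M''_ts; subst d w.
have le_D : D%:Z <= (m + D)%N%:Z by rewrite lez_nat leq_addl.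
rewrite /walk_hom le_D coef1 (ZliftE _ (Z_idx_deg le_D erefl)) scale1r.
by move/torsion_elt_hcast; apply: Z_nontorsion.
Qed.

End CycleHom.

(** * The cycle carrying a non-torsion element *)

Section ReachabilityAndCycles.
Variable Q : quiver.
Implicit Types (u v w : qV Q) (s : seq (qA Q)).

Definition arrow_rel : rel (qV Q) :=
  fun x y => [exists a, (src a == x) && (tgt a == y)].

Lemma connect_ispathP u w : reflect (exists s, ispath u w s) (connect arrow_rel u w).
Proof.
apply: (iffP connectP) => [[p] | [s]].
  elim: p u => [|y p IH] u /=; first by move=> _ ->; exists [::]; rewrite /= eqxx.
  case/andP=> /existsP[a /andP[/eqP au /eqP ay]] /IH{}IH /IH[s ys].
  by exists (a :: s); rewrite /= au eqxx ay.
elim: s u => [|a s IH] u /=; first by move/eqP->; exists [::].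
case/andP=> /eqP au /IH[p tp ->]; exists (tgt a :: p) => //=; rewrite tp andbT.
by apply/existsP; exists a; rewrite au !eqxx.
Qed.

Lemma exists_simple_cycle u s : ispath u u s -> (0 < size s)%N ->
  exists c, simple_cycle u c.
Proof.
case: s => // a0 s' us _.
pose loop n := [exists t : n.-tuple (qA Q), ispath u u t] && (0 < n)%N.
have loop_s : loop (size (a0 :: s')).
  by rewrite /loop andbT; apply/existsP; exists (in_tuple (a0 :: s')).
case: (ex_minnP (ex_intro loop _ loop_s)) => n /andP[/existsP[c uc] n_gt0] min_n.
exists c; rewrite /simple_cycle size_tuple n_gt0 uc /=.
apply/negPn/negP => /(uniqPn (src a0))[i [j [lt_ij]]].
rewrite size_map size_tuple => lt_jn; have lt_in := ltn_trans lt_ij lt_jn.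
rewrite !(nth_map a0) ?size_tuple // => srcE.
(* cutting out the closed sub-walk c_i ... c_(j-1) leaves a shorter loop *)
pose c' := take i c ++ drop j c.
have uc' : ispath u u c'.
  have ui : ispath u (path_tgt u (take i c)) (take i c).
    by move: uc; rewrite -{1}(cat_take_drop i c) ispath_cat => /andP[].
  have ju : ispath (path_tgt u (take j c)) u (drop j c).
    by move: uc; rewrite -{1}(cat_take_drop j c) ispath_cat => /andP[].
  apply: cat_ispath ui _.
  by rewrite -(src_nth a0 uc) ?size_tuple // srcE (src_nth a0 uc) ?size_tuple.
have size_c' : size c' = (i + (n - j))%N.
  by rewrite size_cat size_takel ?size_drop ?size_tuple // ltnW.
have : (n <= size c')%N.
  apply: min_n; rewrite /loop size_c' addn_gt0 subn_gt0 lt_jn orbT andbT.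
  by apply/existsP; exists (tcast size_c' (in_tuple c')); rewrite val_tcast.
by rewrite size_c'; lia.
Qed.

End ReachabilityAndCycles.
Arguments arrow_rel {Q}.

Section NontorsionRoot.
Variables (k : fieldType) (Q : quiver) (M : grmod k Q).
Hypothesis M_mod : is_grmod M.

Lemma nontorsion_arrow d w (x : gsp M d w) : ~ torsion_elt x ->
  exists2 a, src a = w & ~ torsion_elt (gact M d w a x).
Proof.
move=> x_nt; apply: NNPP => all_tors; apply/x_nt/(torsion_elt_arrows M_mod) => a.
have [wa|w_off] := eqVneq w (src a); last exact: torsion_elt_off.
by apply: NNPP => a_nt; apply: all_tors; exists a.
Qed.

(* Take a vertex carrying a non-torsion element with the fewest vertices
   reachable from it. *)
Lemma exists_nontorsion_root d w (x : gsp M d w) : ~ torsion_elt x ->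
  exists d0 w0 (y0 : gsp M d0 w0), ~ torsion_elt y0 /\
    forall d u (z : gsp M d u), ~ torsion_elt z ->
      connect arrow_rel w0 u -> connect arrow_rel u w0.
Proof.
pose reach (y : qV Q) := [set u | connect arrow_rel y u].
move: (leqnn #|reach w|); move: {2}#|reach w| => m.
elim: m d w x => [|m IH] d w x le_card x_nt.
  by move: le_card; rewrite leqn0 => /eqP/cards0_eq/setP/(_ w); rewrite !inE connect0.
apply: NNPP => no_root; apply: (no_root); exists d, w, x; split => // d' u z z_nt wu.
apply/negPn/negP => not_uw.
have lt_card : (#|reach u| < #|reach w|)%N.
  apply/proper_card/properP; split; last by exists w; rewrite !inE ?connect0.
  by apply/subsetP => y; rewrite !inE; apply: connect_trans wu.
apply: no_root; apply: (IH _ _ z _ z_nt).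
by rewrite -ltnS (leq_trans lt_card).
Qed.

End NontorsionRoot.

Section RootCycle.
Variables (k : fieldType) (Q : quiver) (M : grmod k Q).
Hypothesis M_mod : is_grmod M.
Hypothesis Q_GK : finite_GKdim Q.
Variables (d0 : int) (w0 : qV Q) (y0 : gsp M d0 w0).
Hypothesis y0_nt : ~ torsion_elt y0.
Hypothesis w0_root : forall d u (z : gsp M d u), ~ torsion_elt z ->
  connect arrow_rel w0 u -> connect arrow_rel u w0.
Variables (cs : seq (qA Q)) (a0 : qA Q).
Hypothesis cs_cycle : simple_cycle w0 cs.

Let n_gt0 : (0 < size cs)%N. Proof. by case/and3P: cs_cycle. Qed.
Let cs_loop : ispath w0 w0 cs. Proof. by case/and3P: cs_cycle. Qed.

Definition cyc_arrow j := nth a0 cs (j %% size cs).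

Lemma cyc_arrow_periodic i : cyc_arrow (i + size cs) = cyc_arrow i.
Proof. by rewrite /cyc_arrow modnDr. Qed.

Lemma cyc_arrow_src0 : src (cyc_arrow 0) = w0.
Proof. by rewrite /cyc_arrow mod0n (src_nth a0 cs_loop n_gt0) take0. Qed.

Lemma cyc_arrow_walk i : tgt (cyc_arrow i) = src (cyc_arrow i.+1).
Proof.
rewrite /cyc_arrow -addn1 -modnDml addn1.
have := ltn_mod i (size cs); rewrite n_gt0; move: (i %% size cs)%N => j lt_jn.
rewrite (tgt_nth a0 cs_loop) //; case: (ltngtP j.+1 (size cs)) => [lt_j1n|lt_nj1|j1E].
- by rewrite modn_small // (src_nth a0 cs_loop).
- by rewrite ltnNge lt_jn in lt_nj1.
- by rewrite j1E modnn take_size -(ispath_tgt cs_loop) (src_nth a0 cs_loop n_gt0) take0.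
Qed.

Lemma cyc_arrow_ispath j m :
  ispath (src (cyc_arrow j)) (src (cyc_arrow (j + m)))
    (mkseq (fun i => cyc_arrow (j + i)) m).
Proof.
have walk i : tgt (cyc_arrow (j + i)) = src (cyc_arrow (j + i.+1)).
  by rewrite cyc_arrow_walk addnS.
by have := ispath_mkseq walk m; rewrite addn0.
Qed.

Lemma reach_cyc_arrow L : connect arrow_rel w0 (src (cyc_arrow L)).
Proof.
apply/connect_ispathP; rewrite -cyc_arrow_src0 -(add0n L); eexists.
exact: cyc_arrow_ispath.
Qed.

(* Any arrow b out of src (cyc_arrow L) leading back to w0 closes a loop at
   src (cyc_arrow L), as does going once around cs; by finite GK-dimension the
   two loops start with the same arrow. *)
Lemma cyc_arrow_unique_exit L b : src b = src (cyc_arrow L) ->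
  connect arrow_rel (tgt b) w0 -> b = cyc_arrow L.
Proof.
move=> bL /connect_ispathP[s bs].
have loop_b :
    ispath (src (cyc_arrow L)) (src (cyc_arrow L)) (b :: s ++ mkseq cyc_arrow L).
  rewrite /= bL eqxx; apply: cat_ispath bs _.
  by have := cyc_arrow_ispath 0 L; rewrite cyc_arrow_src0.
have := cyc_arrow_ispath L (size cs); rewrite cyc_arrow_periodic.
case: (size cs) n_gt0 => // m _ loop_cs.
by rewrite (loops_same_head Q_GK loop_b loop_cs) addn0.
Qed.

Definition Zwalk L : hpt M := hpt_acts (hpt_of y0) (mkseq cyc_arrow L).

Lemma Zwalk_next L : Zwalk L.+1 = hpt_act (cyc_arrow L) (Zwalk L).
Proof. by rewrite /Zwalk /hpt_acts mkseqS foldl_rcons. Qed.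

Lemma Zwalk_idx L : projT1 (Zwalk L) = (d0 + L%:Z, src (cyc_arrow L)).
Proof.
elim: L => [|L IH]; first by rewrite /= addr0 cyc_arrow_src0.
by rewrite Zwalk_next hpt_act_idx IH /= cyc_arrow_walk -addrA -PoszD addn1.
Qed.

Lemma Zwalk_exit L b : b != cyc_arrow L -> torsion_elt (projT2 (hpt_act b (Zwalk L))).
Proof.
move=> b_exit; apply: NNPP; have := Zwalk_idx L.
case: (Zwalk L) => [[d u] z] /= [_ uL] b_nt; subst u.
have bL : src b = src (cyc_arrow L).
  by apply: NNPP => /eqP bL; apply/b_nt/(torsion_elt_off M_mod); rewrite eq_sym.
have reach_b : connect arrow_rel w0 (tgt b).
  apply: connect_trans (reach_cyc_arrow L) (connect1 _).
  by apply/existsP; exists b; rewrite bL !eqxx.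
by move/eqP: b_exit; apply; apply: cyc_arrow_unique_exit bL (w0_root b_nt reach_b).
Qed.

Lemma Zwalk_nontorsion L : ~ torsion_elt (projT2 (Zwalk L)).
Proof.
elim: L => [//|L IH]; rewrite Zwalk_next.
have [a a_nt] : exists a, ~ torsion_elt (projT2 (hpt_act a (Zwalk L))).
  by move: IH; case: (Zwalk L) => [[d u] z] /= /(nontorsion_arrow M_mod)[a _]; exists a.
by case: (eqVneq a (cyc_arrow L)) => [<- //|/Zwalk_exit].
Qed.

Lemma rotated_cycle_simple K : simple_cycle (src (cyc_arrow K))
  (mkseq (fun i => cyc_arrow (K + i)) (size cs)).
Proof.
apply/and3P; split; first by rewrite size_mkseq.
  by have := cyc_arrow_ispath K (size cs); rewrite cyc_arrow_periodic.
have [_ _ uniq_src] := and3P cs_cycle.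
rewrite -map_comp map_inj_in_uniq ?iota_uniq // => i j.
rewrite !mem_iota !add0n /= /cyc_arrow => lt_in lt_jn.
rewrite -!(nth_map a0 (src a0) (@src Q)) ?ltn_mod //.
move/eqP; rewrite nth_uniq ?size_map ?ltn_mod // eqn_modDl !modn_small //.
exact/eqP.
Qed.

(* Shifting the walk so that its degrees start at a multiple of the period
   puts us in the situation of not_HomQGr_zero_cycle. *)
Lemma root_cycle_not_HomQGr_zero :
  exists v c, simple_cycle v c /\ ~ HomQGr_zero (Ov_rel k v c) M.
Proof.
set D := (size cs * absz d0)%N.
have [K0 K0E] : exists K0 : nat, d0 + K0%:Z = D%:Z.
  exists (absz (D%:Z - d0)); rewrite gez0_abs; first by rewrite addrCA subrr addr0.
  by rewrite subr_ge0 (le_trans (lez_abs d0)) // lez_nat leq_pmull.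
exists (src (cyc_arrow K0)), (mkseq (fun i => cyc_arrow (K0 + i)) (size cs)).
split; first exact: rotated_cycle_simple.
apply: (not_HomQGr_zero_cycle M_mod (D := D) (Z := fun t => Zwalk (K0 + t))).
- by move=> i; rewrite addnA cyc_arrow_periodic.
- by move=> i; rewrite cyc_arrow_walk addnS.
- by rewrite addn0.
- exact: dvdn_mulr.
- by move=> t; rewrite Zwalk_idx PoszD addrA K0E -PoszD.
- by move=> t; exact: Zwalk_nontorsion.
- by move=> t; rewrite addnS Zwalk_next.
- by move=> t b; exact: Zwalk_exit.
Qed.

End RootCycle.

Theorem proposition5p7 (k : fieldType) (Q : quiver) (M : grmod k Q) :
  finite_GKdim Q -> is_grmod M ->
  (pi_zero M <->
   forall (v : qV Q) (c : seq (qA Q)), simple_cycle v c ->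
     HomQGr_zero (Ov_rel k v c) M).
Proof.
move=> Q_GK M_mod; split=> [/(torsion_of_pi_zero M_mod) tors v c _|HomO].
  exact: HomQGr_zero_of_torsion.
apply: HomQGr_zero_of_torsion => d w x; apply: NNPP => x_nt.
have [d0 [w0 [y0 [y0_nt w0_root]]]] := exists_nontorsion_root x_nt.
have [a a_src a_nt] := nontorsion_arrow M_mod y0_nt.
have [s back] : exists s, ispath (tgt a) w0 s.
  apply/connect_ispathP/(w0_root _ _ _ a_nt)/connect1/existsP.
  by exists a; rewrite a_src !eqxx.
have loop_a : ispath w0 w0 (a :: s) by rewrite /= a_src eqxx.
have [cs cs_cycle] := exists_simple_cycle loop_a isT.
have [v [c [vc not_Hom]]] :=
  root_cycle_not_HomQGr_zero M_mod Q_GK y0_nt w0_root a cs_cycle.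
exact: not_Hom (HomO v c vc).
Qed.
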